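(* Let $k\ge6$ be an integer and $\alpha>\beta>0$. Then $$ (N'_{-1},N'_1)\subset(N_{-1},N_1)\subset(\delta_{-1},\delta_1). $$
   Context: Put $r=2k+\alpha+\beta+1$, $q=(\alpha-\beta)/r$, $s=(\alpha+\beta)/r$, and let $\omega,\tau,\tau'\in(0,\pi/2)$ be given by $\sin\omega=q$, $\sin\tau=s$, $\sin\tau'=\frac{\alpha+\beta+1}{2k+\alpha+\beta+1}$. For $j=\pm1$ let $\delta_j=j\cos(\tau+j\omega)$, $$N'_j=j\left(\cos(\tau'+j\omega)-\frac{3}{10}\left(\frac{\sin^4(\tau'+j\omega)}{2\cos\tau'\cos\omega}\right)^{1/3}r^{-2/3}\right),$$ $$N_j=j\left(\cos(\tau+j\omega)-\frac{5}{17}\left(\frac{\sin^4(\tau+j\omega)}{2\cos\tau\cos\omega}\right)^{1/3}r^{-2/3}\right).$$ *)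

From Stdlib Require Import Reals.
Open Scope R_scope.

(* Parameters: k : nat, a = alpha, b = beta. *)
Definition rr (k : nat) (a b : R) : R := 2 * INR k + a + b + 1.
Definition qq (k : nat) (a b : R) : R := (a - b) / rr k a b.
Definition ss (k : nat) (a b : R) : R := (a + b) / rr k a b.
Definition omega (k : nat) (a b : R) : R := asin (qq k a b).
Definition tau (k : nat) (a b : R) : R := asin (ss k a b).
Definition tau' (k : nat) (a b : R) : R :=
  asin ((a + b + 1) / (2 * INR k + a + b + 1)).

Definition cbrt (x : R) : R := if Rle_dec x 0 then 0 else Rpower x (1/3).

(* j ranges over {-1, 1}, encoded as a real *)
Definition delta (k : nat) (a b j : R) : R :=
  j * cos (tau k a b + j * omega k a b).

Definition NN' (k : nat) (a b j : R) : R :=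
  let t := tau' k a b in let w := omega k a b in
  j * (cos (t + j * w)
       - 3 / 10 * cbrt (sin (t + j * w) ^ 4 / (2 * cos t * cos w))
         * Rpower (rr k a b) (- (2 / 3))).

Definition NN (k : nat) (a b j : R) : R :=
  let t := tau k a b in let w := omega k a b in
  j * (cos (t + j * w)
       - 5 / 17 * cbrt (sin (t + j * w) ^ 4 / (2 * cos t * cos w))
         * Rpower (rr k a b) (- (2 / 3))).

From Stdlib Require Import Reals Lra Lia Psatz.
Open Scope R_scope.

(* Each of N'_j, N_j, delta_j is [endpoint c h t w j] with h = r^(-2/3) and
   (c, t) = (3/10, tau'), (5/17, tau), (0, tau), so both inclusions compare
   endpoints for t <= t' and c <= c'.  At j = -1 everything is monotone in t:
   cos (t - w) decreases while sin (t - w)^4 / cos t increases.  At j = 1 the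
   cosine term still decreases, and the inequality
   sin (t + w) (cos t + cos t') <= 2 cos t sin (t' + w) bounds the growth of
   sin (t + w)^4 / cos t from t to t' by 16 C^3 C' / (C + C')^4 with
   C = cos t, C' = cos t'.  For k >= 6 one has cos^2 tau' >= 12/13 cos^2 tau,
   which keeps this factor below (51/50)^3, and 51/50 = (3/10) / (5/17). *)

Lemma cbrt_nonneg x : 0 <= cbrt x.
Proof.
  unfold cbrt, Rpower; destruct (Rle_dec x 0); [lra | left; apply exp_pos].
Qed.

Lemma cbrt_le_compat x y : x <= y -> cbrt x <= cbrt y.
Proof.
  intros Hxy; unfold cbrt at 1; destruct (Rle_dec x 0).
  - apply cbrt_nonneg.
  - unfold cbrt; destruct (Rle_dec y 0); [lra |].
    apply Rle_Rpower_l; lra.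
Qed.

Lemma cbrt_le_mult c x y : 0 < c -> 0 < x -> y <= c ^ 3 * x -> cbrt y <= c * cbrt x.
Proof.
  intros Hc Hx Hy; unfold cbrt at 1; destruct (Rle_dec y 0).
  - pose proof (cbrt_nonneg x); nra.
  - unfold cbrt; destruct (Rle_dec x 0); [lra |].
    apply Rle_trans with (Rpower (c ^ 3 * x) (1 / 3)).
    + apply Rle_Rpower_l; lra.
    + rewrite <- Rpower_mult_distr, <- (Rpower_pow 3 c Hc), Rpower_mult
        by (try apply pow_lt; lra).
      replace (INR 3 * (1 / 3)) with 1 by (simpl; field).
      rewrite Rpower_1 by lra; lra.
Qed.

Lemma pow4_div_le x x' y y' : 0 <= x <= x' -> 0 < y' <= y -> x ^ 4 / y <= x' ^ 4 / y'.
Proof.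
  intros Hx Hy; unfold Rdiv.
  apply Rmult_le_compat.
  - apply pow_le; lra.
  - left; apply Rinv_0_lt_compat; lra.
  - apply pow_incr; lra.
  - apply Rinv_le_contravar; lra.
Qed.

Lemma mean_pow4_bound C C' : 0 < C' <= C -> 12 * C ^ 2 <= 13 * C' ^ 2 ->
  16 * C ^ 3 * C' <= (51 / 50) ^ 3 * (C + C') ^ 4.
Proof.
  intros HC H13.
  (* C' >= sqrt (12/13) C > 0.96 C; after substituting C' = 0.96 C + d, every
     coefficient of the difference, as a polynomial in C and d >= 0, is positive. *)
  assert (Hd : 96 / 100 * C <= C') by nra.
  set (d := C' - 96 / 100 * C).
  replace C' with (96 / 100 * C + d) by (unfold d; ring).
  assert (0 <= d) by (unfold d; lra).
  assert (0 <= C ^ 3 * d) by (apply Rmult_le_pos; [apply pow_le |]; lra).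
  assert (0 <= C ^ 2 * d ^ 2) by (apply Rmult_le_pos; apply pow_le; lra).
  assert (0 <= C * d ^ 3) by (apply Rmult_le_pos; [| apply pow_le]; lra).
  assert (0 <= d ^ 4) by (apply pow_le; lra).
  assert (0 < C ^ 4) by (apply pow_lt; lra).
  nra.
Qed.

Lemma pow4_ratio_bound U U' C C' : 0 <= U -> 0 < C' <= C -> 12 * C ^ 2 <= 13 * C' ^ 2 ->
  U * (C + C') <= 2 * C * U' -> U ^ 4 * C' <= (51 / 50) ^ 3 * (U' ^ 4 * C).
Proof.
  intros HU HC H13 HUU.
  assert (H4 : (U * (C + C')) ^ 4 <= (2 * C * U') ^ 4) by (apply pow_incr; nra).
  assert (Hmean := mean_pow4_bound C C' HC H13).
  assert (0 < (C + C') ^ 4) by (apply pow_lt; lra).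
  assert (0 <= U' ^ 4 * C) by (apply Rmult_le_pos; [apply pow_le; nra | lra]).
  apply Rmult_le_reg_r with ((C + C') ^ 4); [assumption |].
  rewrite !Rpow_mult_distr in H4.
  apply Rle_trans with (2 ^ 4 * C ^ 4 * U' ^ 4 * C'); [nra |].
  replace (2 ^ 4 * C ^ 4 * U' ^ 4 * C') with ((U' ^ 4 * C) * (16 * C ^ 3 * C')) by ring.
  nra.
Qed.

Lemma sin_add_mean_le t t' w : 0 < w < t -> t <= t' < PI / 2 ->
  sin (t + w) * (cos t + cos t') <= 2 * cos t * sin (t' + w).
Proof.
  intros Hw Ht.
  assert (Hcos : cos t' <= cos t) by (apply cos_decr_1; lra).
  assert (Hsin : sin t <= sin t') by (apply sin_incr_1; lra).
  assert (Hsub : 0 <= sin (t - w)) by (apply sin_ge_0; lra).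
  assert (0 < cos t) by (apply cos_gt_0; lra).
  assert (0 < cos w) by (apply cos_gt_0; lra).
  assert (Hid : 2 * cos t * sin (t' + w) - sin (t + w) * (cos t + cos t')
              = (cos t - cos t') * sin (t - w) + 2 * cos t * cos w * (sin t' - sin t))
    by (rewrite !sin_plus, sin_minus; ring).
  assert (0 <= (cos t - cos t') * sin (t - w)) by (apply Rmult_le_pos; lra).
  assert (0 <= 2 * cos t * cos w * (sin t' - sin t))
    by (repeat apply Rmult_le_pos; lra).
  lra.
Qed.

Definition endpoint (c h t w j : R) : R :=
  j * (cos (t + j * w) - c * cbrt (sin (t + j * w) ^ 4 / (2 * cos t * cos w)) * h).

Lemma endpoint_right_le c c' h t t' w :
  0 < w < t -> t <= t' < PI / 2 -> 12 * cos t ^ 2 <= 13 * cos t' ^ 2 ->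
  0 <= c -> 51 / 50 * c <= c' -> 0 <= h ->
  endpoint c' h t' w 1 <= endpoint c h t w 1.
Proof.
  intros Hw Ht H13 Hc Hcc Hh; unfold endpoint; rewrite !Rmult_1_l.
  assert (Hcos : cos (t' + w) <= cos (t + w)) by (apply cos_decr_1; lra).
  assert (0 < cos t') by (apply cos_gt_0; lra).
  assert (cos t' <= cos t) by (apply cos_decr_1; lra).
  assert (0 < cos w) by (apply cos_gt_0; lra).
  assert (0 <= sin (t + w)) by (apply sin_ge_0; lra).
  assert (0 < sin (t' + w)) by (apply sin_gt_0; lra).
  set (A := cbrt (sin (t + w) ^ 4 / (2 * cos t * cos w))).
  set (A' := cbrt (sin (t' + w) ^ 4 / (2 * cos t' * cos w))).
  assert (HA : A <= 51 / 50 * A').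
  { apply cbrt_le_mult.
    { lra. }
    { apply Rdiv_lt_0_compat; [apply pow_lt |]; nra. }
    assert (Hr : sin (t + w) ^ 4 * cos t' <= (51 / 50) ^ 3 * (sin (t' + w) ^ 4 * cos t))
      by (apply pow4_ratio_bound; [lra | lra | exact H13 | apply sin_add_mean_le; lra]).
    replace (sin (t + w) ^ 4 / (2 * cos t * cos w))
      with (sin (t + w) ^ 4 * cos t' / (2 * cos t * cos t' * cos w)) by (field; lra).
    replace ((51 / 50) ^ 3 * (sin (t' + w) ^ 4 / (2 * cos t' * cos w)))
      with ((51 / 50) ^ 3 * (sin (t' + w) ^ 4 * cos t) / (2 * cos t * cos t' * cos w))
      by (field; lra).
    unfold Rdiv; apply Rmult_le_compat_r; [| exact Hr].
    left; apply Rinv_0_lt_compat; repeat apply Rmult_lt_0_compat; lra. }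
  assert (0 <= A') by apply cbrt_nonneg.
  assert (c * A <= c' * A') by nra.
  nra.
Qed.

Lemma endpoint_left_le c c' h t t' w :
  0 < w < t -> t <= t' < PI / 2 -> 0 <= c <= c' -> 0 <= h ->
  endpoint c h t w (-1) <= endpoint c' h t' w (-1).
Proof.
  intros Hw Ht Hc Hh; unfold endpoint.
  replace (t + -1 * w) with (t - w) by ring.
  replace (t' + -1 * w) with (t' - w) by ring.
  assert (Hcos : cos (t' - w) <= cos (t - w)) by (apply cos_decr_1; lra).
  assert (HA : cbrt (sin (t - w) ^ 4 / (2 * cos t * cos w))
               <= cbrt (sin (t' - w) ^ 4 / (2 * cos t' * cos w))).
  { apply cbrt_le_compat, pow4_div_le.
    - split; [apply sin_ge_0 | apply sin_incr_1]; lra.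
    - assert (0 < cos t') by (apply cos_gt_0; lra).
      assert (cos t' <= cos t) by (apply cos_decr_1; lra).
      assert (0 < cos w) by (apply cos_gt_0; lra).
      nra. }
  pose proof (cbrt_nonneg (sin (t - w) ^ 4 / (2 * cos t * cos w))).
  assert (c * cbrt (sin (t - w) ^ 4 / (2 * cos t * cos w))
          <= c' * cbrt (sin (t' - w) ^ 4 / (2 * cos t' * cos w))) by nra.
  nra.
Qed.

Lemma endpoint_interval_sub c c' h t t' w :
  0 < w < t -> t <= t' < PI / 2 -> 12 * cos t ^ 2 <= 13 * cos t' ^ 2 ->
  0 <= c -> 51 / 50 * c <= c' -> 0 <= h ->
  forall x, endpoint c' h t' w (-1) < x < endpoint c' h t' w 1 ->
            endpoint c h t w (-1) < x < endpoint c h t w 1.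
Proof.
  intros Hw Ht H13 Hc Hcc Hh x Hx.
  pose proof (endpoint_left_le c c' h t t' w Hw Ht ltac:(lra) Hh).
  pose proof (endpoint_right_le c c' h t t' w Hw Ht H13 Hc Hcc Hh).
  lra.
Qed.

Definition ss' (k : nat) (a b : R) : R := (a + b + 1) / rr k a b.

Lemma sines_ordered k a b : (1 <= k)%nat -> 0 < b < a ->
  0 < qq k a b < ss k a b /\ ss k a b < ss' k a b < 1.
Proof.
  intros Hk Hab.
  pose proof (le_INR 1 k Hk) as Hk1; simpl in Hk1.
  unfold qq, ss, ss', rr.
  assert (Hr : 0 < 2 * INR k + a + b + 1) by lra.
  repeat split; unfold Rdiv.
  - apply Rmult_lt_0_compat; [lra | now apply Rinv_0_lt_compat].
  - apply Rmult_lt_compat_r; [now apply Rinv_0_lt_compat | lra].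
  - apply Rmult_lt_compat_r; [now apply Rinv_0_lt_compat | lra].
  - apply (Rmult_lt_reg_r (2 * INR k + a + b + 1)); [lra |].
    rewrite Rmult_assoc, Rinv_l by lra; lra.
Qed.

Lemma ss'_cos2_ratio k a b : (6 <= k)%nat -> 0 <= a + b ->
  12 * (1 - ss k a b ^ 2) <= 13 * (1 - ss' k a b ^ 2).
Proof.
  intros Hk Hab.
  pose proof (le_INR 6 k Hk) as Hk6; simpl in Hk6.
  unfold ss, ss', rr; set (r := 2 * INR k + a + b + 1).
  assert (0 < r) by (unfold r; lra).
  assert (0 < r ^ 2) by (apply pow_lt; lra).
  replace (12 * (1 - ((a + b) / r) ^ 2)) with (12 * (r ^ 2 - (a + b) ^ 2) / r ^ 2)
    by (field; lra).
  replace (13 * (1 - ((a + b + 1) / r) ^ 2)) with (13 * (r ^ 2 - (a + b + 1) ^ 2) / r ^ 2)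
    by (field; lra).
  unfold Rdiv; apply Rmult_le_compat_r; [left; now apply Rinv_0_lt_compat |].
  (* The difference of the numerators is 4k^2 + 4k - 12 + (a + b)(4k - 24). *)
  unfold r; nra.
Qed.

Lemma asin_lt x y : -1 <= x -> x < y -> y <= 1 -> asin x < asin y.
Proof.
  intros Hx Hxy Hy.
  destruct (asin_bound x), (asin_bound y).
  apply sin_increasing_0; try assumption.
  rewrite !sin_asin; lra.
Qed.

Lemma cos_pow2 x : cos x ^ 2 = 1 - sin x ^ 2.
Proof. rewrite <- !Rsqr_pow2; apply cos2. Qed.

Lemma angles_ordered k a b : (6 <= k)%nat -> 0 < b < a ->
  0 < omega k a b < tau k a b /\ tau k a b < tau' k a b < PI / 2 /\
  12 * cos (tau k a b) ^ 2 <= 13 * cos (tau' k a b) ^ 2.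
Proof.
  intros Hk Hab.
  destruct (sines_ordered k a b ltac:(lia) Hab) as [[Hq Hqs] [Hss Hs1]].
  pose proof (ss'_cos2_ratio k a b Hk ltac:(lra)).
  change (tau' k a b) with (asin (ss' k a b)).
  unfold omega, tau; rewrite !cos_pow2, !sin_asin by lra.
  rewrite <- asin_0.
  repeat split; try (apply asin_lt; lra); try assumption.
  apply asin_bound_lt; lra.
Qed.

Theorem lemma10 (k : nat) (a b : R) :
  (6 <= k)%nat -> a > b -> b > 0 ->
  (forall x, NN' k a b (-1) < x < NN' k a b 1 -> NN k a b (-1) < x < NN k a b 1) /\
  (forall x, NN k a b (-1) < x < NN k a b 1 -> delta k a b (-1) < x < delta k a b 1).
Proof.
  intros Hk Hab Hb.
  destruct (angles_ordered k a b Hk ltac:(lra)) as (Hw & Ht & H13).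
  set (h := Rpower (rr k a b) (- (2 / 3))).
  assert (Hh : 0 <= h) by (left; unfold h, Rpower; apply exp_pos).
  change (NN' k a b) with (endpoint (3 / 10) h (tau' k a b) (omega k a b)).
  change (NN k a b) with (endpoint (5 / 17) h (tau k a b) (omega k a b)).
  assert (Hdelta : forall j, delta k a b j = endpoint 0 h (tau k a b) (omega k a b) j)
    by (intro j; unfold delta, endpoint; ring).
  rewrite !Hdelta.
  pose proof (pow2_ge_0 (cos (tau k a b))).
  split; apply endpoint_interval_sub; lra.
Qed.
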